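(* Let $G$ be a bipartite instance, let $(u,v)\in E$ with $u$'s deadline earlier than $v$'s, and fix the ranks $\mathbf y_{-uv}$ of all vertices other than $u,v$. Let $\tau$ be the marginal rank of $u$ with respect to $\mathbf y_{-uv}$ in the graph $G-\{v\}$, and $\gamma$ the marginal rank of $v$ with respect to $\mathbf y_{-uv}$ in the graph $G-\{u\}$. Then, with $y_u,y_v$ independent and uniform on $[0,1)$, $$\mathbb{E}_{y_u,y_v}\big[\alpha_u\mathbf 1(y_u<\tau)+\alpha_v\mathbf 1(y_v<\gamma)\big]=\int_0^\tau g(y)\,dy+\int_0^\gamma g(y)\,dy.$$
   Context: Fully online matching model on a graph $G=(V,E)$: each step is the arrival or the deadline of a vertex; at arrival, edges to previously arrived vertices are revealed; every neighbor of $v$ arrives before $v$'s deadline; at a vertex's deadline, if unmatched, it is irrevocably matched to an unmatched neighbor or left unmatched. Ranking: each vertex $w$ has a rank $y_w\in[0,1)$ (drawn uniformly at random on arrival); at the deadline of an unmatched vertex $w$, if it has unmatched neighbors it is matched to the unmatched neighbor of minimum rank. $M(\mathbf y)$ is the resulting matching for rank vector $\mathbf y$. If an edge $(a,b)$ is matched at $a$'s deadline, $a$ is called active and $b$ passive. Fix a non-decreasing $g:[0,1]\to[0,1]$ with $g(1)=1$. Dual variables: if $(a,b)$ is matched with $a$ active and $b$ passive, set $\alpha_a=1-g(y_b)$ and $\alpha_b=g(y_b)$; unmatched vertices have $\alpha=0$. Marginal rank: for a vertex $w$ in a graph $H$ and fixed ranks of all other vertices of $H$, the marginal rank of $w$ is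 the largest value $\theta\in[0,1]$ such that $w$ is passive in the matching produced by Ranking on $H$ when $y_w=\theta^-$ (rank infinitesimally below $\theta$); it equals $0$ if no such value exists. *)

From mathcomp Require Import all_boot.
From Stdlib Require Import Reals.

Set Implicit Arguments.
Unset Strict Implicit.
Unset Printing Implicit Defensive.

Section Model.
Variable V : finType.

(* A fully online bipartite instance: adjacency relation, arrival and
   deadline time stamps (all 2|V| time stamps distinct). *)
Definition valid_instance (adj : rel V) (arr dl : V -> nat) : Prop :=
  (forall a b, adj a b = adj b a) /\
  (forall a, ~~ adj a a) /\
  injective arr /\ injective dl /\
  (forall a b, arr a <> dl b) /\
  (forall a, (arr a < dl a)%N) /\
  (forall a b, adj a b -> (arr a < dl b)%N).

Definition bipartite (adj : rel V) : Prop :=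
  exists side : V -> bool, forall a b, adj a b -> side a != side b.

Definition deadline_order (dl : V -> nat) : seq V :=
  sort (fun a b => (dl a <= dl b)%N) (enum V).

(* matching as a list of (active, passive) pairs *)
Definition matched (M : seq (V * V)) (x : V) : bool :=
  has (fun p => (p.1 == x) || (p.2 == x)) M.

(* unmatched neighbour of minimum rank; ties (a null event) are broken
   in favour of the vertex occurring first in enum V *)
Definition minpick (y : V -> R) (l : seq V) : option V :=
  foldr (fun x acc => match acc with
                      | None => Some x
                      | Some z => if Rle_dec (y x) (y z) then Some x else Some z
                      end) None l.

(* Ranking run on the induced subgraph G[S] *)
Definition ranking_step (adj : rel V) (S : {set V}) (y : V -> R)
    (M : seq (V * V)) (w : V) : seq (V * V) :=
  if (w \in S) && ~~ matched M w then
    match minpick y [seq x <- enum V | (x \in S) && adj w x && ~~ matched M x] with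
    | Some x => rcons M (w, x)
    | None => M
    end
  else M.

Definition ranking (adj : rel V) (dl : V -> nat) (S : {set V}) (y : V -> R)
  : seq (V * V) :=
  foldl (ranking_step adj S y) [::] (deadline_order dl).

Definition passive adj dl (S : {set V}) (y : V -> R) (w : V) : bool :=
  has (fun p => p.2 == w) (ranking adj dl S y).

Definition upd (y : V -> R) (w : V) (t : R) : V -> R :=
  fun x => if x == w then t else y x.

(* w is passive in Ranking on G[S] when y_w = theta^- *)
Definition passive_below adj dl (S : {set V}) (y : V -> R) (w : V) (theta : R)
  : Prop :=
  exists eps : R, (0 < eps)%R /\
    forall t : R, (theta - eps < t)%R -> (t < theta)%R -> passive adj dl S (upd y w t) w.

Definition is_marginal_rank adj dl (S : {set V}) (y : V -> R) (w : V) (theta : R)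
  : Prop :=
  ((0 < theta <= 1)%R /\ passive_below adj dl S y w theta /\
     forall th, (0 < th <= 1)%R -> passive_below adj dl S y w th -> (th <= theta)%R)
  \/
  (theta = 0%R /\
     forall th, (0 < th <= 1)%R -> ~ passive_below adj dl S y w th).

Definition alpha adj dl (g : R -> R) (y : V -> R) (w : V) : R :=
  let M := ranking adj dl [set: V] y in
  match [seq p <- M | p.1 == w] with
  | p :: _ => (1 - g (y p.2))%R
  | [::] => match [seq p <- M | p.2 == w] with
            | p :: _ => g (y p.2)
            | [::] => 0%R
            end
  end.

End Model.

Definition indic (b : bool) : R := if b then 1%R else 0%R.
Definition Rltb (a b : R) : bool := if Rlt_dec a b then true else false.

Definition has_RInt (f : R -> R) (a b l : R) : Prop :=
  exists pr : Riemann_integrable f a b, RiemannInt pr = l.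

(* If [y_u < tau] then, by the definition of the marginal rank and since lowering
   its own rank keeps a passive vertex passive, [u] is passive when Ranking runs on
   [G - v].  Putting [v] back changes that run only along an alternating path
   starting at [v]; in a bipartite graph every vertex on the opposite side from [v]
   that was passive stays passive, so [u] is passive in [G] and [alpha_u = g y_u].
   Symmetrically [alpha_v = g y_v] when [y_v < gamma].  The integrand is thus
   [1(y_u < tau) g y_u + 1(y_v < gamma) g y_v], and [g], being monotone, is Riemann
   integrable. *)

From mathcomp Require Import all_boot.
From Stdlib Require Import Reals Lra Lia FunctionalExtensionality.
From Coquelicot Require Coquelicot.

Set Implicit Arguments.
Unset Strict Implicit.
Unset Printing Implicit Defensive.

Section RiemannIntegration.
Import Coquelicot.Coquelicot.
Local Open Scope R_scope.

Fixpoint psum (v : nat -> R) (k : nat) : R :=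
  if k is k'.+1 then psum v k' + v k' else 0.

Lemma psum_telescope (G v : nat -> R) k :
  (forall j, v j = G j.+1 - G j) -> psum v k = G k - G O.
Proof. by move=> Hv; elim: k => [|k IH] /=; rewrite ?IH ?Hv; ring. Qed.

Lemma StepFun_open_const (F : R -> R) x y c : x <= y ->
  (forall t, x < t < y -> F t = c) ->
  {pr : IsStepFun F x y & RiemannInt_SF (mkStepFun pr) = c * (y - x)}.
Proof.
move=> Hxy HF.
have ac : adapted_couple F x y [:: x; y] [:: c].
  rewrite /adapted_couple /Rmin /Rmax; case: Rle_dec => // _.
  split; first by move=> [|i] /= Hi; [lra | lia].
  do 3 (split => //).
  by move=> [|i] /= Hi; [move=> t; apply: HF | lia].
exists (existT _ [:: x; y] (existT _ [:: c] ac)).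
by rewrite /RiemannInt_SF /=; case: Rle_dec => // _ /=; ring.
Qed.

Lemma StepFun_uniform (F : R -> R) a h (v : nat -> R) : 0 < h ->
  (forall j t, a + INR j * h < t < a + INR j.+1 * h -> F t = v j) ->
  forall k, {pr : IsStepFun F a (a + INR k * h) &
             RiemannInt_SF (mkStepFun pr) = psum v k * h}.
Proof.
move=> Hh HF; elim=> [|k [pr1 I1]].
  have [|| pr I] := @StepFun_open_const F a (a + INR 0 * h) 0; rewrite /=; try lra.
    by move=> t; lra.
  by exists pr; rewrite I /=; ring.
have [|| pr2 I2] := @StepFun_open_const F (a + INR k * h) (a + INR k.+1 * h) (v k).
- rewrite S_INR; nra.
- exact: HF.
exists (StepFun_P46 pr1 pr2).
by rewrite -(StepFun_P43 pr1 pr2) I1 I2 S_INR /=; ring.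
Qed.

Definition uniform_cell (a h t : R) : R := IZR (Int_part ((t - a) / h)).

Lemma uniform_cell_open a h t (j : nat) : 0 < h ->
  a + INR j * h < t < a + INR j.+1 * h -> uniform_cell a h t = INR j.
Proof.
move=> Hh; rewrite S_INR => Ht.
have lo : INR j <= (t - a) / h by apply/Rle_div_r; lra.
have hi : (t - a) / h < INR j + 1 by apply/Rlt_div_l; lra.
by rewrite /uniform_cell -(Int_part_spec ((t - a) / h) (Z.of_nat j)) -?INR_IZR_INZ //; lra.
Qed.

Lemma uniform_cell_bounds a h t : 0 < h ->
  a + uniform_cell a h t * h <= t <= a + (uniform_cell a h t + 1) * h.
Proof.
move=> Hh; have [lo hi] := base_Int_part ((t - a) / h).
rewrite /uniform_cell; split.
- by move/(Rle_div_r _ _ _ Hh): lo; lra.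
- have : (t - a) / h < IZR (Int_part ((t - a) / h)) + 1 by lra.
  by move/(Rlt_div_l _ _ _ Hh); lra.
Qed.

(* On a uniform partition of mesh [h], [f] is approximated by its value at the
   left end of each cell, with error bounded by its increment on the cell; these
   increments telescope, so the error integrates to [(f b - f a) * h]. *)
Lemma Riemann_integrable_monotone (f : R -> R) a b : a < b ->
  (forall x y, x <= y -> f x <= f y) -> Riemann_integrable f a b.
Proof.
move=> Hab Hf eps; have eps0 := cond_pos eps.
have fab : f a <= f b by apply: Hf; lra.
have [n [_ Hn]] : {n : nat | INR n <= (b - a) * (f b - f a) / eps < INR n + 1}.
  by apply: nfloor_ex; apply: Rdiv_le_0_compat => //; nra.
have N0 := pos_INR n.
set h := (b - a) / INR n.+1.
have Hh : 0 < h by rewrite /h S_INR; apply: Rdiv_lt_0_compat; lra.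
have Hb : a + INR n.+1 * h = b by rewrite /h S_INR; field; lra.
pose G j := f (a + INR j * h).
pose phi t := f (a + uniform_cell a h t * h).
pose psi t := f (a + (uniform_cell a h t + 1) * h) - phi t.
have phi_cell j t : a + INR j * h < t < a + INR j.+1 * h -> phi t = G j.
  by move=> Ht; rewrite /phi (uniform_cell_open Hh Ht).
have psi_cell j t : a + INR j * h < t < a + INR j.+1 * h -> psi t = G j.+1 - G j.
  by move=> Ht; rewrite /psi /phi (uniform_cell_open Hh Ht) /G S_INR.
have [phi_pr _] := StepFun_uniform Hh phi_cell n.+1.
have [psi_pr Ipsi] := StepFun_uniform Hh psi_cell n.+1.
move: phi_pr psi_pr Ipsi; rewrite Hb => phi_pr psi_pr.
rewrite (@psum_telescope G) // /G Hb /= Rmult_0_l Rplus_0_r => Ipsi.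
exists (mkStepFun phi_pr), (mkStepFun psi_pr); split.
- rewrite Rmin_left ?Rmax_right; try lra.
  move=> t Ht /=; have [lo hi] := uniform_cell_bounds a t Hh.
  have := Hf _ _ lo; have := Hf _ _ hi; rewrite /psi /phi => ? ?.
  by rewrite Rabs_right; lra.
- have bound : (b - a) * (f b - f a) < (INR n + 1) * eps by apply/Rlt_div_l.
  rewrite Ipsi Rabs_right; last by nra.
  rewrite /h S_INR Rmult_div_assoc (Rmult_comm (f b - f a)).
  by apply/Rlt_div_l; lra.
Qed.

Lemma Riemann_integrable_monotone_on (f : R -> R) a b : a <= b ->
  (forall x y, a <= x -> x <= y -> y <= b -> f x <= f y) ->
  Riemann_integrable f a b.
Proof.
move=> Hab Hf; case: (Rle_lt_or_eq_dec _ _ Hab) => [lt_ab|<-]; last exact: RiemannInt_P7.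
pose clamp x := Rmax a (Rmin x b).
apply: (@Riemann_integrable_ext (f \o clamp)).
  rewrite Rmin_left ?Rmax_right; try lra.
  by move=> x Hx; rewrite /= /clamp Rmin_left ?Rmax_right; lra.
apply: Riemann_integrable_monotone => // x y Hxy; rewrite /= /clamp.
apply: Hf; first exact: Rmax_l.
- by apply: Rle_max_compat_l; apply: Rle_min_compat_r.
- by apply: Rmax_lub; [lra | apply: Rmin_r].
Qed.

Lemma has_RInt_is_RInt (f : R -> R) a b l : is_RInt f a b l -> has_RInt f a b l.
Proof.
move=> Hf; have ex : ex_RInt f a b by exists l.
by exists (ex_RInt_Reals_0 _ _ _ ex); rewrite -RInt_Reals; apply: is_RInt_unique.
Qed.

Lemma is_RInt_const_R (c a b : R) : is_RInt (fun _ => c) a b ((b - a) * c).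
Proof. exact: (@is_RInt_const R_NormedModule). Qed.

Lemma is_RInt_truncate (g : R -> R) a th b : a <= th <= b -> ex_RInt g a th ->
  is_RInt (fun s => if Rltb s th then g s else 0) a b (RInt g a th).
Proof.
move=> Hth /RInt_correct Hg; rewrite -[RInt g a th]Rplus_0_r.
apply: (@is_RInt_Chasles R_NormedModule _ a th b).
- apply: is_RInt_ext Hg => x; rewrite Rmin_left ?Rmax_right; try lra.
  by move=> Hx; rewrite /Rltb; case: Rlt_dec => // ?; lra.
- have := @is_RInt_const_R 0 th b; rewrite Rmult_0_r.
  apply: is_RInt_ext => x; rewrite Rmin_left ?Rmax_right; try lra.
  by move=> Hx; rewrite /Rltb; case: Rlt_dec => // ?; lra.
Qed.

Lemma is_RInt_separable (f : R -> R -> R) (h1 h2 : R -> R) I1 I2 :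
  is_RInt h1 0 1 I1 -> is_RInt h2 0 1 I2 ->
  (forall x y, 0 <= x <= 1 -> 0 <= y <= 1 -> f x y = h1 x + h2 y) ->
  (forall y, 0 <= y <= 1 -> is_RInt (fun x => f x y) 0 1 (I1 + h2 y)) /\
  is_RInt (fun y => I1 + h2 y) 0 1 (I1 + I2).
Proof.
move=> H1 H2 Hf; split.
- move=> y Hy.
  have := @is_RInt_plus R_NormedModule _ _ 0 1 _ _ H1 (@is_RInt_const_R (h2 y) 0 1).
  rewrite Rminus_0_r Rmult_1_l; apply: is_RInt_ext => x; rewrite Rmin_left ?Rmax_right; try lra.
  by move=> Hx; rewrite Hf //; lra.
- have := @is_RInt_plus R_NormedModule _ _ 0 1 _ _ (@is_RInt_const_R I1 0 1) H2.
  by rewrite Rminus_0_r Rmult_1_l.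
Qed.

Lemma iterated_RInt_truncations (g : R -> R) (f : R -> R -> R) tau gamma :
  0 <= tau <= 1 -> 0 <= gamma <= 1 ->
  (forall a b, 0 <= a -> a <= b -> b <= 1 -> g a <= g b) ->
  (forall x y, 0 <= x <= 1 -> 0 <= y <= 1 ->
     f x y = (if Rltb x tau then g x else 0) + (if Rltb y gamma then g y else 0)) ->
  exists (F : R -> R) (I1 I2 : R),
    (forall y, 0 <= y <= 1 -> has_RInt (fun x => f x y) 0 1 (F y)) /\
    has_RInt g 0 tau I1 /\ has_RInt g 0 gamma I2 /\ has_RInt F 0 1 (I1 + I2).
Proof.
move=> Htau Hgam g_mono Hf.
have ex_g th : 0 <= th <= 1 -> ex_RInt g 0 th.
  move=> Hth; apply/ex_RInt_Reals_1/Riemann_integrable_monotone_on => [|a b *]; first lra.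
  by apply: g_mono; lra.
have [inner outer] := is_RInt_separable (is_RInt_truncate Htau (ex_g _ Htau))
  (is_RInt_truncate Hgam (ex_g _ Hgam)) Hf.
exists (fun y => RInt g 0 tau + (if Rltb y gamma then g y else 0)).
exists (RInt g 0 tau), (RInt g 0 gamma).
split; first by move=> y Hy; apply/has_RInt_is_RInt/inner.
by split; [|split]; apply: has_RInt_is_RInt => //; apply/RInt_correct/ex_g.
Qed.

End RiemannIntegration.

Section MinPick.
Variable V : finType.
Implicit Types (y : V -> R) (l : seq V).

Lemma minpick_nil y l : minpick y l = None -> l = [::].
Proof. by case: l => //= a l; case: minpick => // z; case: Rle_dec. Qed.

Lemma minpick_min y l x : minpick y l = Some x ->
  x \in l /\ forall z, z \in l -> (y x <= y z)%R.
Proof.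
elim: l x => //= a l IH x.
case E: (minpick y l) => [z|]; last first.
  by move: (minpick_nil E) => -> [<-]; split=> [|t]; rewrite ?inE // => /eqP ->; lra.
have [zl zmin] := IH z E.
case: Rle_dec => H [<-]; split; rewrite ?inE ?eqxx ?zl ?orbT //;
  by move=> t; rewrite inE => /orP [/eqP ->|/zmin]; lra.
Qed.

Lemma eq_minpick y1 y2 l : {in l, y1 =1 y2} -> minpick y1 l = minpick y2 l.
Proof.
elim: l => //= a l IH H.
rewrite IH; last by move=> z zl; apply: H; rewrite inE zl orbT.
case E: (minpick y2 l) => [z|] //; have [zl _] := minpick_min E.
by rewrite (H a) ?mem_head // (H z) // inE zl orbT.
Qed.

Lemma minpick_lower y1 y2 w l : (y2 w < y1 w)%R ->
  (forall z, z != w -> y2 z = y1 z) ->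
  minpick y2 l = minpick y1 l \/ minpick y2 l = Some w.
Proof.
move=> Hw Hz; elim: l => /= [|a l [] E]; rewrite ?E; first by left.
- case E1: (minpick y1 l) => [z|]; last by left.
  have [->|aw] := eqVneq a w.
    have [->|zw] := eqVneq z w; first by case: Rle_dec => /= H; [right | lra].
    by rewrite (Hz z zw); do 2 case: Rle_dec => //= ?; auto; lra.
  rewrite (Hz a aw); have [->|zw] := eqVneq z w; last by rewrite (Hz z zw); left.
  by do 2 case: Rle_dec => //= ?; auto; lra.
- case E1: (minpick y1 l) => [z|]; last by move: E; rewrite (minpick_nil E1).
  have [wl wmin] := minpick_min E; have [zl _] := minpick_min E1.
  have := wmin z zl.
  have : (y2 z <= y1 z)%R by have [->|zw] := eqVneq z w; [lra | rewrite Hz //; lra].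
  have [->|aw] := eqVneq a w; first by case: Rle_dec => /= ? ? ?; [right | lra].
  rewrite (Hz a aw); case: Rle_dec => H1 ? ?; last by right.
  by left; case: Rle_dec => //= H2; exfalso; apply: H2; lra.
Qed.

Lemma minpick_filter_add y (P1 P2 : pred V) x s :
  (forall z, z != x -> P1 z = P2 z) -> P1 x = false ->
  minpick y (filter P2 s) = minpick y (filter P1 s) \/
  minpick y (filter P2 s) = Some x.
Proof.
move=> HP Hx; elim: s => /= [|a s IH]; first by left.
have sub z : z \in filter P1 s -> z \in filter P2 s.
  rewrite !mem_filter => /andP [Pz ->]; rewrite -HP ?Pz //.
  by apply: contraTneq Pz => ->; rewrite Hx.
have [->|ax] := eqVneq a x.
  rewrite Hx; case: (P2 x) => //=.
  by case: IH => ->; case: (minpick y (filter P1 s)) => [z|] /=; try case: Rle_dec; auto.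
rewrite (HP a ax); case: (P2 a) => //=.
case: IH => E; rewrite E; first by left.
have [xl xmin] := minpick_min E.
case: Rle_dec => H1; last by right.
left; case E1: (minpick y (filter P1 s)) => [z|] //.
have [zl _] := minpick_min E1.
by case: Rle_dec => // H2; exfalso; apply: H2; have := xmin z (sub z zl); lra.
Qed.

End MinPick.

Section CoupledRuns.
Variables (V : finType) (adj : rel V) (side : V -> bool).
Hypothesis adj_irr : forall a, ~~ adj a a.
Hypothesis bip : forall a b, adj a b -> side a != side b.
Implicit Types (y : V -> R) (B P : pred V).

Definition candidates B w := [seq x <- enum V | adj w x && ~~ B x].

Definition pick y B w : option V :=
  if B w then None else minpick y (candidates B w).

Definition next y B w : pred V := fun z => [|| B z, z == w | pick y B w == Some z].

Definition add_passive P (c : option V) : pred V := fun z => P z || (c == Some z).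

Definition differ_by B1 B2 x :=
  [/\ B1 x, ~~ B2 x & forall z, z != x -> B1 z = B2 z].

Lemma adj_side a b : adj a b -> side b = ~~ side a.
Proof. by move/bip; case: (side a); case: (side b). Qed.

Lemma adj_neq a b : adj a b -> b != a.
Proof. by apply: contraTneq => ->; apply: adj_irr. Qed.

Lemma pick_some y B w c : pick y B w = Some c -> [/\ ~~ B w, adj w c & ~~ B c].
Proof.
rewrite /pick; case: (B w) => // /minpick_min [].
by rewrite mem_filter => /andP [/andP [-> ->]].
Qed.

Lemma eq_pick y B1 B2 w : B1 =1 B2 -> pick y B1 w = pick y B2 w.
Proof.
move=> eqB; rewrite /pick /candidates eqB.
by congr (if _ then _ else minpick _ _); apply: eq_filter => x; rewrite eqB.
Qed.

Lemma pick_differ_by y B1 B2 x w : differ_by B1 B2 x -> ~~ B1 w ->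
  pick y B2 w = pick y B1 w \/ pick y B2 w = Some x.
Proof.
move=> [B1x _ eqB] B1w.
have wx : w != x by apply: contraNneq B1w => ->.
rewrite /pick -(eqB w wx) (negbTE B1w) /candidates.
by apply: minpick_filter_add => [z zx|]; rewrite ?(eqB z zx) ?B1x ?andbF.
Qed.

Lemma step_differ_by_self y B1 B2 x : differ_by B1 B2 x ->
  pick y B1 x = None /\
  (pick y B2 x = None /\ next y B1 x =1 next y B2 x \/
   exists c, [/\ pick y B2 x = Some c, adj x c & differ_by (next y B2 x) (next y B1 x) c]).
Proof.
move=> [B1x B2x eqB]; have E1 : pick y B1 x = None by rewrite /pick B1x.
split=> //; rewrite /next E1.
case E2: (pick y B2 x) => [c|]; last first.
  left; split => // z /=.
  by have [->|zx] := eqVneq z x; rewrite ?orbT // eqB.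
have [_ axc B2c] := pick_some E2; have cx := adj_neq axc.
right; exists c; split => //; split => /=.
- by rewrite eqxx !orbT.
- by rewrite eqB // (negbTE B2c) (negbTE cx).
- move=> z zc; have [->|zx] := eqVneq z x; first by rewrite !orbT.
  by rewrite eqB // (inj_eq Some_inj) (eq_sym c) (negbTE zc).
Qed.

Lemma step_differ_by_other y B1 B2 x w : differ_by B1 B2 x -> w != x ->
  [\/ pick y B1 w = pick y B2 w /\ differ_by (next y B1 w) (next y B2 w) x,
      [/\ pick y B1 w = None, pick y B2 w = Some x & next y B1 w =1 next y B2 w]
    | exists c, [/\ pick y B1 w = Some c, pick y B2 w = Some x, adj w c, adj w x
        & differ_by (next y B1 w) (next y B2 w) c]].
Proof.
move=> dB wx; have [B1x B2x eqB] := dB.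
have xw : (x == w) = false by rewrite eq_sym (negbTE wx).
have c1x : (pick y B1 w == Some x) = false.
  case E1: (pick y B1 w) => [c|] //; have [_ _ B1c] := pick_some E1.
  by rewrite (inj_eq Some_inj); apply: contraNF B1c => /eqP ->.
have same : pick y B1 w = pick y B2 w -> differ_by (next y B1 w) (next y B2 w) x.
  rewrite /next => <-; split => /=; first by rewrite B1x.
    by rewrite (negbTE B2x) xw c1x.
  by move=> z zx; rewrite eqB.
case B1w: (B1 w).
  have E : pick y B1 w = pick y B2 w by rewrite /pick -eqB // B1w.
  by constructor 1; split => //; apply: same.
have [E|E] := pick_differ_by y dB (negbT B1w).
  by constructor 1; split => //; apply/same/esym.
have [_ awx _] := pick_some E.
case E1: (pick y B1 w) => [c|]; last first.
  constructor 2; split => // z; rewrite /next E E1 /=.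
  have [->|zx] := eqVneq z x; first by rewrite B1x eqxx !orbT.
  by rewrite eqB // (inj_eq Some_inj) (eq_sym x) (negbTE zx).
have [_ awc B1c] := pick_some E1.
have cx : c != x by apply: contraNneq B1c => ->.
constructor 3; exists c; split => //; split; rewrite /next ?E ?E1 /=.
- by rewrite eqxx !orbT.
- rewrite -eqB // (negbTE B1c) (negbTE (adj_neq awc)).
  by rewrite (inj_eq Some_inj) (eq_sym x) (negbTE cx).
- move=> z zc; rewrite !(inj_eq Some_inj) (eq_sym c) (negbTE zc).
  have [->|zx] := eqVneq z x; first by rewrite B1x !orbT.
  by rewrite eqB // (eq_sym x) (negbTE zx).
Qed.

Lemma step_differ_by y B1 B2 x w : differ_by B1 B2 x ->
  [\/ pick y B1 w = pick y B2 w /\ differ_by (next y B1 w) (next y B2 w) x,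
      [/\ pick y B1 w = None, next y B1 w =1 next y B2 w
        & forall c, pick y B2 w = Some c -> c = x],
      exists c, [/\ w = x, pick y B1 w = None, pick y B2 w = Some c, adj x c
        & differ_by (next y B2 w) (next y B1 w) c]
    | exists c, [/\ pick y B1 w = Some c, pick y B2 w = Some x, adj w c, adj w x
        & differ_by (next y B1 w) (next y B2 w) c]].
Proof.
move=> dB; have [->|wx] := eqVneq w x.
  have [E1 [[E2 eqB] | [c [E2 axc dB']]]] := step_differ_by_self y dB.
    by constructor 2; split => // c; rewrite E2.
  by constructor 3; exists c.
case: (step_differ_by_other y dB wx) => [same | [E1 E2 eqB] | other].
- by constructor 1.
- by constructor 2; split => // c; rewrite E2 => -[].
- by constructor 4.
Qed.

(* Invariant relating a run on [G - r] (blocked set [B1], passive set [P1]) to a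
   run on [G] ([B2], [P2]), with [sr] the side of [r]: the blocked sets differ in at
   most one vertex, which lies on the side of [r] if only run 1 blocks it, and on
   the other side and is passive in run 2 if only run 2 blocks it. *)
Definition coupled (sr : bool) B1 B2 P1 P2 :=
  (forall z, side z != sr -> P1 z -> P2 z) /\
  [\/ B1 =1 B2,
      exists2 x, side x = sr & differ_by B1 B2 x
    | exists2 x, side x != sr /\ P2 x & differ_by B2 B1 x].

Lemma sub_add_passive sr P1 P2 c1 c2 :
  (forall z, side z != sr -> P1 z -> P2 z) ->
  (forall z, side z != sr -> c1 = Some z -> add_passive P2 c2 z) ->
  forall z, side z != sr -> add_passive P1 c1 z -> add_passive P2 c2 z.
Proof.
move=> HP Hc z sz /orP [/(HP z sz) P2z|/eqP /(Hc z sz) //].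
by rewrite /add_passive P2z.
Qed.

Lemma coupled_step y sr B1 B2 P1 P2 w : coupled sr B1 B2 P1 P2 ->
  coupled sr (next y B1 w) (next y B2 w)
             (add_passive P1 (pick y B1 w)) (add_passive P2 (pick y B2 w)).
Proof.
have picked P c : add_passive P (Some c) c by rewrite /add_passive eqxx orbT.
move=> [HP [eqB | [x sx dB] | [x [sx P2x] dB]]].
- rewrite (eq_pick y w eqB); split; first by apply: sub_add_passive => // z _ ->.
  by constructor 1 => z; rewrite /next eqB (eq_pick y w eqB).
- case: (step_differ_by y w dB) =>
    [[E dB'] | [E1 eqB' _] | [c [_ E1 E2 axc dB']] | [c [E1 E2 awc awx dB']]].
  + rewrite E in dB' *; split; first by apply: sub_add_passive => // z _ ->.
    by constructor 2; exists x.
  + rewrite E1 in eqB' *; split; first exact: sub_add_passive.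
    by constructor 1.
  + rewrite E1 E2 in dB' *; split; first exact: sub_add_passive.
    constructor 3; exists c => //; split => //.
    by rewrite (adj_side axc) sx; case: (sr).
  + have sc : side c = sr by rewrite (adj_side awc) -(adj_side awx).
    rewrite E1 E2 in dB' *; split; last by constructor 2; exists c.
    by apply: sub_add_passive => // z; rewrite -sc => sz [zc]; rewrite zc eqxx in sz.
- case: (step_differ_by y w dB) =>
    [[E dB'] | [E2 eqB' Hc1] | [c [_ E2 E1 axc dB']] | [c [E2 E1 awc awx dB']]].
  + rewrite -E in dB' *; split; first by apply: sub_add_passive => // z _ ->.
    by constructor 3; exists x => //; split => //; rewrite /add_passive P2x.
  + split; first by apply: sub_add_passive => // z _ /Hc1 ->; rewrite /add_passive P2x.
    by constructor 1 => z; rewrite eqB'.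
  + have sc : side c = sr by move: sx; rewrite (adj_side axc); case: (side x); case: (sr).
    rewrite E1 E2 in dB' *; split; last by constructor 2; exists c.
    by apply: sub_add_passive => // z; rewrite -sc => sz [zc]; rewrite zc eqxx in sz.
  + rewrite E1 E2 in dB' *; split.
      by apply: sub_add_passive => // z _ [<-]; rewrite /add_passive P2x.
    constructor 3; exists c => //; split => //.
    by rewrite (adj_side awc) -(adj_side awx).
Qed.

End CoupledRuns.

Section RankingCoupling.
Variables (V : finType) (adj : rel V) (side : V -> bool).
Hypothesis adj_sym : forall a b, adj a b = adj b a.
Hypothesis adj_irr : forall a, ~~ adj a a.
Hypothesis bip : forall a b, adj a b -> side a != side b.
Implicit Types (S : {set V}) (y : V -> R) (M : seq (V * V)) (p : seq V).

Definition unavailable S M z := (z \notin S) || matched M z.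

(* Processed vertices [p] count as blocked: by [exhausted], one that is still
   unmatched has no available neighbour, so it can never be picked. *)
Definition blocked S M p z := unavailable S M z || (z \in p).

Definition passive_in M z := has (fun q => q.2 == z) M.

Definition exhausted p S M :=
  forall z, z \in p -> ~~ unavailable S M z -> forall t, adj z t -> unavailable S M t.

Lemma matched_rcons M a b z :
  matched (rcons M (a, b)) z = [|| a == z, b == z | matched M z].
Proof. by rewrite /matched has_rcons -orbA. Qed.

Lemma ranking_step_pick S y M p w : w \notin p -> exhausted p S M ->
  ranking_step adj S y M w =
  if pick adj y (blocked S M p) w is Some c then rcons M (w, c) else M.
Proof.
move=> wp ex; rewrite /ranking_step /pick /blocked (negbTE wp) orbF /unavailable.
case wS: (w \in S) => //=; case mw: (matched M w) => //=.
congr (if minpick y _ is Some c then _ else _); apply: eq_filter => x.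
case xS: (x \in S); case axw: (adj w x); case mx: (matched M x);
  case xp: (x \in p) => //=.
have := ex x xp; rewrite /unavailable xS mx => /(_ isT w).
by rewrite adj_sym axw wS mw => /(_ isT).
Qed.

Lemma blocked_step S y M p w : w \notin p -> exhausted p S M ->
  blocked S (ranking_step adj S y M w) (w :: p) =
  next adj y (blocked S M p) w.
Proof.
move=> wp ex; apply: functional_extensionality => z.
rewrite (ranking_step_pick y wp ex) /next /blocked /unavailable inE.
case: (pick adj y (blocked S M p) w) => [c|]; rewrite ?matched_rcons.
- rewrite (inj_eq Some_inj) (eq_sym w) (eq_sym c).
  by case: (z \in S); case: (z == w); case: (z == c); case: (matched M z); case: (z \in p).
- by case: (z \in S); case: (z == w); case: (matched M z); case: (z \in p).
Qed.

Lemma passive_in_step S y M p w : w \notin p -> exhausted p S M ->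
  passive_in (ranking_step adj S y M w) =
  add_passive (passive_in M) (pick adj y (blocked S M p) w).
Proof.
move=> wp ex; apply: functional_extensionality => z.
rewrite (ranking_step_pick y wp ex) /add_passive.
case: (pick adj y (blocked S M p) w) => [c|]; rewrite /passive_in ?has_rcons /= ?orbF //.
by rewrite (inj_eq Some_inj) orbC.
Qed.

Lemma exhausted_step S y M p w : w \notin p -> exhausted p S M ->
  exhausted (w :: p) S (ranking_step adj S y M w).
Proof.
move=> wp ex.
have mono t : unavailable S M t -> unavailable S (ranking_step adj S y M w) t.
  rewrite (ranking_step_pick y wp ex); case: pick => [c|] //.
  by rewrite /unavailable matched_rcons => /orP [] ->; rewrite ?orbT.
move=> z; rewrite inE => /orP [/eqP ->|zp].
- rewrite (ranking_step_pick y wp ex).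
  case E: (pick adj y (blocked S M p) w) => [c|].
    by rewrite /unavailable matched_rcons eqxx orbT.
  move=> Hw t awt; move: E; rewrite /pick /blocked (negbTE wp) orbF (negbTE Hw).
  move=> /minpick_nil no_cand.
  have /hasPn /(_ t (mem_enum _ t)) : ~~ has (fun x => adj w x && ~~ blocked S M p x) (enum V).
    by rewrite has_filter negbK; apply/eqP.
  rewrite awt /= negbK => /orP [//|tp].
  apply/negPn/negP => nbt; have := ex t tp nbt w.
  by rewrite adj_sym awt (negbTE Hw) => /(_ isT).
- move=> nb t azt; apply: (mono); apply: (ex z zp) => //.
  by apply: contra nb; apply: mono.
Qed.

Lemma coupled_fold sr S1 S2 y s : uniq s -> forall p M1 M2,
  (forall w, w \in s -> w \notin p) -> exhausted p S1 M1 -> exhausted p S2 M2 ->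
  coupled side sr (blocked S1 M1 p) (blocked S2 M2 p) (passive_in M1) (passive_in M2) ->
  forall z, side z != sr ->
  passive_in (foldl (ranking_step adj S1 y) M1 s) z ->
  passive_in (foldl (ranking_step adj S2 y) M2 s) z.
Proof.
elim: s => [_ p M1 M2 _ _ _ [] //|w s IH /= /andP [ws us] p M1 M2 sp ex1 ex2 cp].
have wp : w \notin p by apply: sp; rewrite mem_head.
apply: (IH us (w :: p)); try exact: exhausted_step.
- move=> z zs; rewrite inE negb_or sp ?inE ?zs ?orbT // andbT.
  by apply: contraNneq ws => <-.
- rewrite !blocked_step // (passive_in_step _ wp ex1) (passive_in_step _ wp ex2).
  exact: coupled_step.
Qed.

Lemma passive_delete_opposite dl y r z : side z != side r ->
  passive adj dl (setD [set: V] [set r]) y z -> passive adj dl [set: V] y z.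
Proof.
have uniq_dl : uniq (deadline_order dl) by rewrite sort_uniq enum_uniq.
move=> szr; apply: (coupled_fold (sr := side r) uniq_dl (p := [::])) => //.
split=> //; constructor 2; exists r => //.
rewrite /differ_by /blocked /unavailable !inE eqxx; split => // x xr.
by rewrite !inE (negbTE xr).
Qed.

End RankingCoupling.

Section RankingFacts.
Variables (V : finType) (adj : rel V) (dl : V -> nat).
Hypothesis adj_irr : forall a, ~~ adj a a.
Implicit Types (S : {set V}) (y : V -> R) (M : seq (V * V)).

Lemma passive_in_ranking_step S y M w x :
  passive_in M x -> passive_in (ranking_step adj S y M w) x.
Proof.
rewrite /ranking_step; case: ifP => // _; case: minpick => [c|] //.
by rewrite /passive_in has_rcons => ->; rewrite orbT.
Qed.

Lemma foldl_ranking_step_lower S y1 y2 w s M1 M2 : (y2 w < y1 w)%R ->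
  (forall z, z != w -> y2 z = y1 z) -> M1 = M2 \/ passive_in M2 w ->
  foldl (ranking_step adj S y1) M1 s = foldl (ranking_step adj S y2) M2 s \/
  passive_in (foldl (ranking_step adj S y2) M2 s) w.
Proof.
move=> Hw Hz; elim: s M1 M2 => [|x s IH] M1 M2 H //=; apply: IH.
case: H => [<-|H]; last by right; apply: passive_in_ranking_step.
rewrite /ranking_step; case: ifP => _; last by left.
set l := [seq _ <- enum V | _].
case: (minpick_lower l Hw Hz) => ->; first by left.
by right; rewrite /passive_in has_rcons /= eqxx.
Qed.

Lemma passive_lower_rank S y w t t' : (t' < t)%R ->
  passive adj dl S (upd y w t) w -> passive adj dl S (upd y w t') w.
Proof.
move=> lt_t; have Hw : (upd y w t' w < upd y w t w)%R by rewrite /upd eqxx.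
have Hz z : z != w -> upd y w t' z = upd y w t z by rewrite /upd => /negbTE ->.
rewrite /passive /ranking.
have := foldl_ranking_step_lower S (deadline_order dl) Hw Hz
  (or_introl (erefl ([::] : seq (V * V)))).
by case => [<-|].
Qed.

Lemma eq_ranking S y1 y2 : {in S, y1 =1 y2} -> ranking adj dl S y1 = ranking adj dl S y2.
Proof.
move=> eqy; have eq_step M w : ranking_step adj S y1 M w = ranking_step adj S y2 M w.
  rewrite /ranking_step; case: ifP => // _; rewrite (@eq_minpick _ _ y2) // => z.
  by rewrite mem_filter => /andP [/andP [/andP [zS _] _] _]; apply: eqy.
by rewrite /ranking; elim: (deadline_order dl) [::] => //= a s IH M; rewrite eq_step IH.
Qed.

Definition passive_not_active M := forall p q, p \in M -> q \in M -> p.2 != q.1.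

Lemma passive_not_active_step S y M w :
  passive_not_active M -> passive_not_active (ranking_step adj S y M w).
Proof.
move=> HM; rewrite /ranking_step; case: ifP => // /andP [_ mw].
case E: minpick => [c|] //; have [cin _] := minpick_min E.
move: cin; rewrite mem_filter => /andP [/andP [/andP [_ awc] mc] _].
have fresh x p : ~~ matched M x -> p \in M -> (p.1 != x) && (p.2 != x).
  by move=> /hasPn Hx pM; have := Hx p pM; rewrite negb_or.
move=> p q; rewrite !mem_rcons !inE => /orP [/eqP -> | pM] /orP [/eqP -> | qM] /=.
- exact: (adj_neq adj_irr awc).
- by have /andP [+ _] := fresh _ _ mc qM; rewrite eq_sym.
- by have /andP [_ +] := fresh _ _ mw pM.
- exact: HM.
Qed.

Lemma passive_not_active_ranking S y : passive_not_active (ranking adj dl S y).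
Proof.
rewrite /ranking; have : passive_not_active [::] by [].
by elim: (deadline_order dl) [::] => //= a s IH M HM; apply/IH/passive_not_active_step.
Qed.

Lemma alpha_passive g y w : passive adj dl [set: V] y w -> alpha adj dl g y w = g (y w).
Proof.
rewrite /alpha /passive; have := passive_not_active_ranking (S := [set: V]) (y := y).
set M := ranking _ _ _ _ => HM /hasP [q qM /eqP qw].
case E1: [seq p <- M | p.1 == w] => [|p0 l].
  case E2: [seq p <- M | p.2 == w] => [|q' l].
    by have := mem_filter (fun p => p.2 == w) q M; rewrite E2 qM qw eqxx.
  by have := mem_head q' l; rewrite -E2 mem_filter => /andP [/eqP ->].
have := mem_head p0 l; rewrite -E1 mem_filter => /andP [/eqP p0w p0M].
by have := HM q p0 qM p0M; rewrite qw p0w eqxx.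
Qed.

Lemma marginal_rank_bounds S y w th :
  is_marginal_rank adj dl S y w th -> (0 <= th <= 1)%R.
Proof. by case=> [[[? ?] _] | [-> _]]; lra. Qed.

Lemma passive_below_marginal_rank S y w th s : is_marginal_rank adj dl S y w th ->
  (0 <= s < th)%R -> passive adj dl S (upd y w s) w.
Proof.
case=> [[_ [[eps [eps0 Hb]] _]] | [-> _]] [s0 sth]; last lra.
case: (Rlt_dec (th - eps) s) => Hs; first exact: Hb.
by apply: (@passive_lower_rank _ _ _ (th - eps / 2)); [lra | apply: Hb; lra].
Qed.

End RankingFacts.

Lemma alpha_below_marginal_rank (V : finType) (adj : rel V) dl (side : V -> bool)
    g y y' w r th s :
  (forall a b, adj a b = adj b a) -> (forall a, ~~ adj a a) ->
  (forall a b, adj a b -> side a != side b) -> adj w r ->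
  is_marginal_rank adj dl (setD [set: V] [set r]) y w th -> (0 <= s < th)%R ->
  y' w = s -> (forall z, z != w -> z != r -> y' z = y z) ->
  alpha adj dl g y' w = g s.
Proof.
move=> adj_sym adj_irr bip awr marg Hs y'w y'z.
have := passive_below_marginal_rank marg Hs.
rewrite /passive (@eq_ranking _ _ _ _ _ y') => [Pw|z]; last first.
  rewrite !inE andbT /upd => zr.
  by have [->|zw] := eqVneq z w; rewrite ?y'w ?y'z.
rewrite alpha_passive -?y'w //.
exact: (passive_delete_opposite adj_sym adj_irr bip (bip _ _ awr) Pw).
Qed.

Theorem lemma4p2 (V : finType) (adj : rel V) (arr dl : V -> nat)
  (g : R -> R) (y : V -> R) (u v : V) (tau gamma : R) :
  valid_instance adj arr dl ->
  bipartite adj ->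
  (forall a b, (0 <= a)%R -> (a <= b)%R -> (b <= 1)%R -> (g a <= g b)%R) ->
  (forall a, (0 <= a <= 1)%R -> (0 <= g a <= 1)%R) ->
  g 1%R = 1%R ->
  adj u v -> (dl u < dl v)%N ->
  (forall x, x != u -> x != v -> (0 <= y x < 1)%R) ->
  is_marginal_rank adj dl (setD [set: V] [set v]) y u tau ->
  is_marginal_rank adj dl (setD [set: V] [set u]) y v gamma ->
  let f := fun yu yv : R =>
    let y' := upd (upd y u yu) v yv in
    (alpha adj dl g y' u * indic (Rltb yu tau)
     + alpha adj dl g y' v * indic (Rltb yv gamma))%R in
  exists (F : R -> R) (I1 I2 : R),
    (forall yv, (0 <= yv <= 1)%R -> has_RInt (fun yu => f yu yv) 0 1 (F yv)) /\
    has_RInt g 0 tau I1 /\ has_RInt g 0 gamma I2 /\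
    has_RInt F 0 1 (I1 + I2)%R.
Proof.
move=> [adj_sym [adj_irr _]] [side bip] g_mono _ _ auv _ _ marg_u marg_v f.
have uv : u != v by apply: contraTneq auv => ->; apply: adj_irr.
have y_off yu yv z : z != u -> z != v -> upd (upd y u yu) v yv z = y z.
  by rewrite /upd => /negbTE -> /negbTE ->.
have alpha_u yu yv : (0 <= yu < tau)%R -> alpha adj dl g (upd (upd y u yu) v yv) u = g yu.
  move=> Hu; apply: (alpha_below_marginal_rank g adj_sym adj_irr bip auv marg_u Hu).
    by rewrite /upd (negbTE uv) eqxx.
  exact: y_off.
have alpha_v yu yv : (0 <= yv < gamma)%R -> alpha adj dl g (upd (upd y u yu) v yv) v = g yv.
  move=> Hv; rewrite adj_sym in auv.
  apply: (alpha_below_marginal_rank g adj_sym adj_irr bip auv marg_v Hv).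
    by rewrite /upd eqxx.
  by move=> z zv zu; apply: y_off.
apply: (@iterated_RInt_truncations g f tau gamma) => //.
- exact: marginal_rank_bounds marg_u.
- exact: marginal_rank_bounds marg_v.
move=> yu yv [yu0 _] [yv0 _]; rewrite /f /indic /Rltb.
case: Rlt_dec => Hu; case: Rlt_dec => Hv /=;
  rewrite ?(alpha_u _ _ (conj yu0 Hu)) ?(alpha_v _ _ (conj yv0 Hv)); ring.
Qed.
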